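(* Let $\pm_{123},\pm_1,\pm_2,\pm_3\in\{+,-\}$ and $\varphi(n_1,n_2,n_3)=\pm_{123}\langle n_1+n_2+n_3\rangle\pm_1\langle n_1\rangle\pm_2\langle n_2\rangle\pm_3\langle n_3\rangle$. Let $N_1,N_2,N_3,N_{12},N_{123}\ge1$ and $m\in\mathbb Z$. Writing $n_{12}=n_1+n_2$, $n_{123}=n_1+n_2+n_3$, all sets below consist of triples $(n_1,n_2,n_3)\in(\mathbb Z^3)^3$ with $|\varphi(n_1,n_2,n_3)-m|\le1$ and the stated constraints: (i) $\#\{|n_1|\sim N_1,|n_2|\sim N_2,|n_3|\sim N_3\}\lesssim\mathrm{med}(N_1,N_2,N_3)^{-1}(N_1N_2N_3)^3$; (ii) $\#\{|n_{123}|\sim N_{123},|n_1|\sim N_1,|n_2|\sim N_2\}\lesssim\mathrm{med}(N_{123},N_1,N_2)^{-1}(N_{123}N_1N_2)^3$; (iii) $\#\{|n_{123}|\sim N_{123},|n_{12}|\sim N_{12},|n_1|\sim N_1\}\lesssim\min(N_{12},\max(N_{123},N_1))^{-1}(N_{123}N_{12}N_1)^3$; (iv) $\#\{|n_{12}|\sim N_{12},|n_1|\sim N_1,|n_3|\sim N_3\}\lesssim\min(N_{12},\max(N_1,N_3))^{-1}(N_{12}N_1N_3)^3$.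
   Context: $\langle n\rangle=(1+|n|^2)^{1/2}$; $\mathrm{med}$ denotes the median of three numbers. For a fixed absolute constant $c\ge2$, ''$|n|\sim N$'' means $|n|\le c$ if $N=1$ and $c^{-1}N\le|n|\le cN$ if $N\ge2$. Implicit constants are absolute (independent of $m$, the signs and the dyadic scales). *)

From Stdlib Require Import Reals Lra ZArith List.
Open Scope R_scope.

Definition Z3 : Type := (Z * Z * Z)%type.

Definition vadd (a b : Z3) : Z3 :=
  match a, b with (a1, a2, a3), (b1, b2, b3) => ((a1 + b1)%Z, (a2 + b2)%Z, (a3 + b3)%Z) end.

Definition znorm (n : Z3) : R :=
  match n with (a, b, c) => sqrt (IZR a ^ 2 + IZR b ^ 2 + IZR c ^ 2) end.

Definition jb (n : Z3) : R := sqrt (1 + znorm n ^ 2).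

Definition sgn (s : bool) : R := if s then 1 else -1.

Definition phi (s123 s1 s2 s3 : bool) (n1 n2 n3 : Z3) : R :=
  sgn s123 * jb (vadd (vadd n1 n2) n3) + sgn s1 * jb n1 + sgn s2 * jb n2
  + sgn s3 * jb n3.

(* |n| ~ N with the fixed constant c:
   |n| <= c if N = 1, and c^-1 N <= |n| <= c N if N >= 2 *)
Definition sim (c N : R) (n : Z3) : Prop :=
  (N = 1 /\ znorm n <= c) \/ (2 <= N /\ N / c <= znorm n /\ znorm n <= c * N).

Definition med (a b c : R) : R := Rmax (Rmin a b) (Rmin (Rmax a b) c).

(* #{x | P x} <= X : every finite duplicate-free list of elements of the set
   has length at most X (equivalently: the set is finite with cardinality <= X) *)
Definition card_le {T : Type} (P : T -> Prop) (X : R) : Prop :=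
  forall l : list T, NoDup l -> (forall x, In x l -> P x) -> INR (length l) <= X.

Definition dy (k : nat) : R := 2 ^ k.

(* Fix u in Z^3 and look at the v with |v| <= M on which +-<u + v> +- <v> stays within 1 of a
   given value.  On a unit shell r <= |v| <= r + 1 the bracket <v> is known up to O(1), hence so
   is |u + v|, and |u + v|^2 = |u|^2 + 2 u.v + |v|^2 confines u.v to a window of length
   O(|u| + r).  Cut into pieces of width |u|_oo, this window becomes slabs that are thin in the
   direction of the largest coordinate of u: over each point of the two other coordinates a slab
   holds at most four lattice points, and these points lie over a planar elliptic annulus of
   width O(r), which has O(r) lattice points (counted row by row; near the top of the ellipse
   the rows are short and their lengths sum like sum_j 1/sqrt j).  Summing over shells, the level
   set has O(M^2 + M^3/|u|_oo) points; summing over the sup-norm spheres of u, the triples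
   (a, b, v) with |a| <= Ra, |b| <= Rb, |v| <= M on which +-<a + v> +- <v> + F(a, b) stays within
   1 of m number O(Rb^3 Ra^2 M^2 (Ra + M)).  Each of the four estimates is this bound after a
   unimodular change of variables deciding which frequencies play the roles of a, b and v; in
   (i) and (ii) the median scale is put in the role of v. *)

From Stdlib Require Import Reals Lra Lia Psatz ZArith List ClassicalDescription.
Open Scope R_scope.

(** * Counting lattice points *)

Section Counting.

Context {T : Type}.

Lemma card_le_ge0 (P : T -> Prop) X : card_le P X -> 0 <= X.
Proof. intros H. exact (H nil (NoDup_nil _) (fun x Hx => False_ind _ Hx)). Qed.

Lemma card_le_sub (P Q : T -> Prop) X :
  (forall x, P x -> Q x) -> card_le Q X -> card_le P X.
Proof. intros HPQ HQ l Hl Hin. apply HQ; auto. Qed.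

Lemma card_le_weaken (P : T -> Prop) X Y : X <= Y -> card_le P X -> card_le P Y.
Proof. intros HXY HP l Hl Hin. specialize (HP l Hl Hin). lra. Qed.

Lemma card_le_empty (P : T -> Prop) X : (forall x, ~ P x) -> 0 <= X -> card_le P X.
Proof.
  intros HP HX [|x l] _ Hin; [simpl; lra|].
  destruct (HP x (Hin x (or_introl eq_refl))).
Qed.

Lemma card_le_union (P Q S : T -> Prop) X Y :
  (forall x, S x -> P x \/ Q x) -> card_le P X -> card_le Q Y -> card_le S (X + Y).
Proof.
  intros HS HP HQ l Hl Hin.
  set (p := fun x => if excluded_middle_informative (P x) then true else false).
  rewrite <- (filter_length p l), plus_INR.
  assert (INR (length (filter p l)) <= X).
  { apply HP; [apply NoDup_filter; auto|].
    intros x [_ Hx]%filter_In. unfold p in Hx.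
    destruct excluded_middle_informative; [auto|discriminate]. }
  assert (INR (length (filter (fun x => negb (p x)) l)) <= Y).
  { apply HQ; [apply NoDup_filter; auto|].
    intros x [Hx Hpx]%filter_In. unfold p in Hpx.
    destruct excluded_middle_informative; [discriminate|].
    destruct (HS x (Hin x Hx)); tauto. }
  lra.
Qed.

Lemma card_le_cover (P : T -> Prop) (idx : T -> nat) (g : nat -> R) n :
  (forall x, P x -> (idx x <= n)%nat) ->
  (forall j, (j <= n)%nat -> card_le (fun x => P x /\ idx x = j) (g j)) ->
  card_le P (sum_f_R0 g n).
Proof.
  revert P. induction n as [|n IH]; intros P Hidx Hg; simpl.
  - apply card_le_sub with (fun x => P x /\ idx x = 0%nat); [|apply Hg; lia].
    intros x Px. specialize (Hidx x Px). split; [auto|lia].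
  - apply card_le_union with (fun x => P x /\ (idx x <= n)%nat) (fun x => P x /\ idx x = S n).
    + intros x Px. specialize (Hidx x Px).
      destruct (Nat.eq_dec (idx x) (S n)); [right|left]; split; auto; lia.
    + apply IH; [tauto|]. intros j Hj.
      apply card_le_sub with (fun x => P x /\ idx x = j); [tauto|]. apply Hg; lia.
    + apply Hg; lia.
Qed.

Lemma card_le_cover_uniform (P : T -> Prop) (idx : T -> nat) X n :
  (forall x, P x -> (idx x <= n)%nat) ->
  (forall j, (j <= n)%nat -> card_le (fun x => P x /\ idx x = j) X) ->
  card_le P (INR (S n) * X).
Proof.
  intros Hidx HX. rewrite Rmult_comm, <- sum_cte. apply card_le_cover with idx; auto.
Qed.

Lemma card_le_inj {U} (P : T -> Prop) (Q : U -> Prop) (g : T -> U) X :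
  (forall x y, P x -> P y -> g x = g y -> x = y) ->
  (forall x, P x -> Q (g x)) -> card_le Q X -> card_le P X.
Proof.
  intros Hinj HPQ HQ l Hl Hin. rewrite <- (length_map g l). apply HQ.
  - apply NoDup_map_NoDup_ForallPairs; auto. intros x y Hx Hy. apply Hinj; auto.
  - intros y [x [<- Hx]]%in_map_iff. auto.
Qed.

Lemma card_le_fiber {U} (P : T -> Prop) (f : T -> U) Y Z :
  0 <= Z ->
  card_le (fun y => exists x, P x /\ f x = y) Y ->
  (forall y, card_le (fun x => P x /\ f x = y) Z) ->
  card_le P (Y * Z).
Proof.
  intros HZ HY Hfib.
  assert (Hbs : forall bs : list U,
    card_le (fun x => P x /\ In (f x) bs) (INR (length bs) * Z)).
  { induction bs as [|b bs IH]; simpl length.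
    - apply card_le_empty; [intros x [_ []]|simpl; lra].
    - rewrite S_INR, Rmult_plus_distr_r, Rmult_1_l, Rplus_comm.
      apply card_le_union with (fun x => P x /\ f x = b) (fun x => P x /\ In (f x) bs); auto.
      intros x [Px [Hb|Hb]]; [left|right]; auto. }
  intros l Hl Hin.
  set (dec := fun y z : U => excluded_middle_informative (y = z)).
  set (bs := nodup dec (map f l)).
  assert (INR (length bs) <= Y).
  { apply HY; [apply NoDup_nodup|].
    intros y [x [<- Hx]]%nodup_In%in_map_iff. eauto. }
  assert (INR (length l) <= INR (length bs) * Z).
  { apply Hbs; auto. intros x Hx. split; auto. apply nodup_In, in_map; auto. }
  nra.
Qed.

End Counting.

Lemma card_le_prod {A B} (P : A -> Prop) (Q : B -> Prop) X Y :
  card_le P X -> card_le Q Y -> card_le (fun p : A * B => P (fst p) /\ Q (snd p)) (X * Y).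
Proof.
  intros HP HQ. apply card_le_fiber with (f := fst).
  - eapply card_le_ge0; eauto.
  - eapply card_le_sub; [|exact HP]. intros y [x [[Hx _] <-]]; auto.
  - intros y. apply card_le_inj with (Q := Q) (g := snd); [|tauto|auto].
    intros [x1 x2] [y1 y2] [_ Ex] [_ Ey] E; simpl in *; congruence.
Qed.

Definition nat_floor (r : R) : nat := Z.to_nat (Int_part r).

Lemma Int_part_le r s : r <= s -> (Int_part r <= Int_part s)%Z.
Proof.
  intros H. destruct (base_Int_part r), (base_Int_part s).
  assert (IZR (Int_part r) < IZR (Int_part s + 1)) by (rewrite plus_IZR; lra).
  apply lt_IZR in H4. lia.
Qed.

Lemma Int_part_ge0 r : 0 <= r -> (0 <= Int_part r)%Z.
Proof.
  intros H. destruct (base_Int_part r). assert (IZR (-1) < IZR (Int_part r)) by (simpl; lra).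
  apply lt_IZR in H2. lia.
Qed.

Lemma nat_floor_spec r : 0 <= r -> INR (nat_floor r) <= r < INR (nat_floor r) + 1.
Proof.
  intros H. unfold nat_floor. rewrite INR_IZR_INZ, Z2Nat.id by (apply Int_part_ge0; auto).
  destruct (base_Int_part r). lra.
Qed.

Lemma nat_floor_le r s : r <= s -> (nat_floor r <= nat_floor s)%nat.
Proof. intros H. unfold nat_floor. pose proof (Int_part_le r s H). lia. Qed.

Lemma card_le_nat_lt (n : nat) : card_le (fun k : nat => (k < n)%nat) (INR n).
Proof.
  intros l Hl Hin. apply le_INR. rewrite <- (length_seq n 0).
  apply NoDup_incl_length; auto. intros k Hk. apply in_seq. specialize (Hin k Hk). lia.
Qed.

Lemma card_le_Z_interval (a b : R) :
  a <= b -> card_le (fun z : Z => a <= IZR z <= b) (b - a + 2).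
Proof.
  intros Hab. destruct (base_Int_part a) as [Ha1 Ha2], (base_Int_part b) as [Hb1 Hb2].
  assert (Hmb : (Int_part a <= Int_part b)%Z) by (apply Int_part_le; auto).
  set (m := Int_part a) in *. set (n := Z.to_nat (Int_part b - m + 1)).
  apply card_le_weaken with (INR n).
  { unfold n. rewrite INR_IZR_INZ, Z2Nat.id by lia. rewrite plus_IZR, minus_IZR. lra. }
  apply card_le_inj with (Q := fun k : nat => (k < n)%nat) (g := fun z => Z.to_nat (z - m)).
  - intros x y Hx Hy Hxy. assert (m <= x)%Z by (apply le_IZR; lra).
    assert (m <= y)%Z by (apply le_IZR; lra). lia.
  - intros z [Hz1 Hz2]. assert (m <= z)%Z by (apply le_IZR; lra).
    assert (z < Int_part b + 1)%Z by (apply lt_IZR; rewrite plus_IZR; lra). unfold n. lia.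
  - apply card_le_nat_lt.
Qed.

Lemma sum_inv_sqrt_le n :
  sum_f_R0 (fun j => / sqrt (INR (S j))) n <= 2 * sqrt (INR (S n)).
Proof.
  induction n as [|n IH].
  - simpl. rewrite sqrt_1, Rinv_1. lra.
  - rewrite tech5; cbv beta. set (p := INR (S n)) in *.
    replace (INR (S (S n))) with (p + 1) by (unfold p; rewrite (S_INR (S n)); ring).
    assert (Hp : 1 <= p) by (unfold p; rewrite S_INR; pose proof (pos_INR n); lra).
    pose proof (sqrt_sqrt p ltac:(lra)). pose proof (sqrt_sqrt (p + 1) ltac:(lra)).
    assert (Hq : 0 < sqrt (p + 1)) by (apply sqrt_lt_R0; lra).
    pose proof (sqrt_pos p). pose proof (pow2_ge_0 (sqrt (p + 1) - sqrt p)).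
    assert (/ sqrt (p + 1) <= 2 * sqrt (p + 1) - 2 * sqrt p).
    { apply Rmult_le_reg_r with (sqrt (p + 1)); auto. rewrite Rinv_l by lra. nra. }
    lra.
Qed.

Lemma sqrt_sub_le_sqrt a b : a <= b -> sqrt b - sqrt a <= sqrt (b - a).
Proof.
  intros Hab. destruct (Rle_lt_dec a 0) as [Ha|Ha].
  - rewrite (sqrt_neg_0 a Ha).
    pose proof (sqrt_le_1_alt b (b - a) ltac:(lra)). lra.
  - assert (Hle : sqrt a <= sqrt b) by (apply sqrt_le_1_alt; lra).
    rewrite <- (sqrt_square (sqrt b - sqrt a)) by lra. apply sqrt_le_1_alt.
    pose proof (sqrt_sqrt a ltac:(lra)). pose proof (sqrt_sqrt b ltac:(lra)).
    pose proof (sqrt_pos a). nra.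
Qed.

Lemma sqrt_sub_le_div a b : a <= b -> 0 < b -> sqrt b - sqrt a <= (b - a) / sqrt b.
Proof.
  intros Hab Hb. assert (Hsb : 0 < sqrt b) by (apply sqrt_lt_R0; auto).
  apply Rmult_le_reg_r with (sqrt b); auto.
  unfold Rdiv. rewrite Rmult_assoc, Rinv_l, Rmult_1_r by lra.
  pose proof (sqrt_sqrt b ltac:(lra)). destruct (Rle_lt_dec a 0) as [Ha|Ha].
  - rewrite (sqrt_neg_0 a Ha). lra.
  - pose proof (sqrt_sqrt a ltac:(lra)). assert (sqrt a <= sqrt b) by (apply sqrt_le_1_alt; lra).
    pose proof (sqrt_pos a). nra.
Qed.

(* For [Hi <= 0] the second bound reads [_ / 0 = 0], and both radii vanish. *)
Lemma sqrt_div_sub_le (a Lo Hi : R) :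
  1 <= a -> Lo <= Hi ->
  sqrt (Hi / a) - sqrt (Lo / a) <= Rmin (sqrt (Hi - Lo)) ((Hi - Lo) / sqrt Hi).
Proof.
  intros Ha HLH. assert (Ha' : 0 < / a <= 1).
  { split; [apply Rinv_0_lt_compat; lra|rewrite <- Rinv_1; apply Rinv_le_contravar; lra]. }
  apply Rmin_glb.
  - eapply Rle_trans; [apply sqrt_sub_le_sqrt; unfold Rdiv; nra|].
    apply sqrt_le_1_alt. unfold Rdiv. nra.
  - destruct (Rle_lt_dec Hi 0) as [HHi|HHi].
    { rewrite (sqrt_neg_0 Hi), Rdiv_0_r, !sqrt_neg_0 by (unfold Rdiv; nra). lra. }
    eapply Rle_trans; [apply sqrt_sub_le_div; unfold Rdiv; nra|].
    rewrite sqrt_div_alt by lra.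
    assert (Hsh : 0 < sqrt Hi) by (apply sqrt_lt_R0; lra).
    replace ((Hi / a - Lo / a) / (sqrt Hi / sqrt a)) with ((Hi - Lo) / sqrt Hi * (sqrt a / a))
      by (field; split; [apply Rgt_not_eq, sqrt_lt_R0|]; lra).
    assert (sqrt a / a <= 1).
    { pose proof (sqrt_sqrt a ltac:(lra)). pose proof (sqrt_pos a). unfold Rdiv.
      apply Rmult_le_reg_r with a; [lra|]. rewrite Rmult_assoc, Rinv_l by lra. nra. }
    assert (0 <= (Hi - Lo) / sqrt Hi) by (apply Rle_mult_inv_pos; lra). nra.
Qed.

Lemma card_le_sq_band (a x0 Lo Hi : R) :
  1 <= a -> Lo <= Hi ->
  card_le (fun x : Z => Lo <= a * (IZR x - x0) ^ 2 <= Hi)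
    (4 + 2 * Rmin (sqrt (Hi - Lo)) ((Hi - Lo) / sqrt Hi)).
Proof.
  (* [sqrt] vanishes on negative numbers, so [r0] is the inner radius even when [Lo < 0]. *)
  intros Ha HLH. pose proof (sqrt_div_sub_le a Lo Hi Ha HLH) as Hgap.
  set (r1 := sqrt (Hi / a)) in *. set (r0 := sqrt (Lo / a)) in *.
  assert (Hia : 0 < / a) by (apply Rinv_0_lt_compat; lra).
  assert (Hr : r0 <= r1) by (apply sqrt_le_1_alt; unfold Rdiv; apply Rmult_le_compat_r; lra).
  apply card_le_weaken with ((x0 - r0 - (x0 - r1) + 2) + (x0 + r1 - (x0 + r0) + 2)); [lra|].
  apply card_le_union with (fun x : Z => x0 - r1 <= IZR x <= x0 - r0)
                           (fun x : Z => x0 + r0 <= IZR x <= x0 + r1).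
  - intros x [H1 H2]. set (t := IZR x - x0) in *.
    assert (Et : t * t = (a * t ^ 2) * / a) by (field; lra).
    assert (Ht1 : Rabs t <= r1).
    { rewrite <- sqrt_Rsqr_abs. apply sqrt_le_1_alt. unfold Rsqr. rewrite Et.
      apply Rmult_le_compat_r; lra. }
    assert (Ht0 : r0 <= Rabs t).
    { rewrite <- sqrt_Rsqr_abs. apply sqrt_le_1_alt. unfold Rsqr. rewrite Et.
      apply Rmult_le_compat_r; lra. }
    unfold t in *. destruct (Rle_lt_dec (IZR x - x0) 0) as [Hn|Hp].
    + left. rewrite Rabs_left1 in Ht0, Ht1 by lra. lra.
    + right. rewrite Rabs_right in Ht0, Ht1 by lra. lra.
  - apply card_le_Z_interval. lra.
  - apply card_le_Z_interval. lra.
Qed.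

Lemma Z_to_nat_le_nat_floor (z : Z) r : IZR z <= r -> (Z.to_nat z <= nat_floor r)%nat.
Proof.
  intros H. unfold nat_floor. destruct (base_Int_part r).
  assert (IZR z < IZR (Int_part r + 1)) by (rewrite plus_IZR; lra).
  apply lt_IZR in H2. lia.
Qed.

Lemma card_le_slices {T} (P : T -> Prop) (f : T -> R) H W d X :
  0 < d -> 0 <= W ->
  (forall h, H <= h <= H + W -> card_le (fun x => P x /\ h <= f x <= h + d) X) ->
  card_le (fun x => P x /\ H <= f x <= H + W) ((W / d + 1) * X).
Proof.
  intros Hd HW Hslice. assert (HX : 0 <= X) by exact (card_le_ge0 _ _ (Hslice H ltac:(lra))).
  assert (Hq : forall y, (y - H) / d * d = y - H) by (intros; field; lra).
  destruct (nat_floor_spec (W / d)) as [Hn _]; [apply Rle_mult_inv_pos; lra|].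
  set (n := nat_floor (W / d)) in *.
  apply card_le_weaken with (INR (S n) * X); [rewrite S_INR; apply Rmult_le_compat_r; lra|].
  apply card_le_cover_uniform with (idx := fun x => nat_floor ((f x - H) / d)).
  - intros x [_ Hx]. apply nat_floor_le. unfold Rdiv.
    apply Rmult_le_compat_r; [left; apply Rinv_0_lt_compat|]; lra.
  - intros j Hj. apply le_INR in Hj. pose proof (pos_INR j).
    assert (W / d * d = W) by (field; lra).
    assert (Hjd : INR j * d <= W) by nra.
    eapply card_le_sub; [|apply (Hslice (H + INR j * d)); split; nra].
    intros x [[Px Hx] Ej]. split; auto.
    destruct (nat_floor_spec ((f x - H) / d)) as [Hf1 Hf2]; [apply Rle_mult_inv_pos; lra|].
    rewrite Ej in Hf1, Hf2. pose proof (Hq (f x)). nra.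
Qed.

(** * Lattice points in a planar elliptic annulus *)

Definition ell (a k y1 : R) (x0 : R -> R) (p : Z * Z) : R :=
  a * (IZR (fst p) - x0 (IZR (snd p))) ^ 2 + k * (IZR (snd p) - y1) ^ 2.

Section EllipseAnnulus.

Variables (a k y1 A B : R) (x0 : R -> R).
Hypotheses (Ha : 1 <= a) (Hk : 1 <= k) (HAB : A <= B).

Lemma card_le_ell_row (y : Z) :
  card_le (fun p => A <= ell a k y1 x0 p <= B /\ snd p = y)
    (4 + 2 * Rmin (sqrt (B - A)) ((B - A) / sqrt (B - k * (IZR y - y1) ^ 2))).
Proof.
  set (c := k * (IZR y - y1) ^ 2).
  apply card_le_inj with (g := fst)
    (Q := fun x : Z => A - c <= a * (IZR x - x0 (IZR y)) ^ 2 <= B - c).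
  - intros [x1 y'] [x2 y''] [_ E1] [_ E2] E. simpl in *. congruence.
  - intros [x y'] [Hp E]. unfold ell in Hp. simpl in *. subst y'. fold c in Hp. lra.
  - replace (B - A) with (B - c - (A - c)) by ring. apply card_le_sq_band; lra.
Qed.

Lemma card_le_ell_strip (lo X : R) :
  0 <= X ->
  (forall y : Z, lo <= IZR y <= lo + 1 -> y1 <= IZR y ->
     4 + 2 * Rmin (sqrt (B - A)) ((B - A) / sqrt (B - k * (IZR y - y1) ^ 2)) <= X) ->
  card_le (fun p => A <= ell a k y1 x0 p <= B /\ y1 <= IZR (snd p) /\ lo <= IZR (snd p) <= lo + 1)
    (3 * X).
Proof.
  intros HX Hrow. apply card_le_fiber with (f := snd); auto.
  - replace 3 with (lo + 1 - lo + 2) by ring.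
    apply card_le_sub with (fun y : Z => lo <= IZR y <= lo + 1); [|apply card_le_Z_interval; lra].
    intros y [p [[_ [_ Hy]] <-]]. auto.
  - intros y. destruct (classic (lo <= IZR y <= lo + 1 /\ y1 <= IZR y)) as [[Hy Hy1]|Hy].
    + eapply card_le_sub; [|eapply card_le_weaken; [apply (Hrow y Hy Hy1)|apply card_le_ell_row]].
      tauto.
    + apply card_le_empty; auto. intros p [[_ Hp] <-]. tauto.
Qed.

Let s := sqrt (B / k).

Lemma ell_radius_sq : 0 <= B -> k * (s * s) = B.
Proof. intros HB. unfold s. rewrite sqrt_sqrt; [field|apply Rle_mult_inv_pos]; lra. Qed.

Lemma ell_half_height p :
  0 <= B -> ell a k y1 x0 p <= B -> y1 <= IZR (snd p) -> IZR (snd p) - y1 <= s.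
Proof.
  intros HB Hp Hy. unfold ell in Hp. pose proof (pow2_ge_0 (IZR (fst p) - x0 (IZR (snd p)))).
  pose proof (ell_radius_sq HB). assert (0 <= s) by apply sqrt_pos.
  destruct (Rle_lt_dec (IZR (snd p) - y1) s) as [|Hlt]; auto.
  assert (s * s < (IZR (snd p) - y1) ^ 2) by nra. nra.
Qed.

Lemma card_le_ell_cap :
  0 <= B ->
  card_le (fun p => A <= ell a k y1 x0 p <= B /\ y1 <= IZR (snd p) /\ y1 + s - 1 <= IZR (snd p))
    (3 * (4 + 2 * sqrt (B - A))).
Proof.
  intros HB. eapply card_le_sub; [|apply (card_le_ell_strip (y1 + s - 1))].
  - intros p [Hp [Hy Hy']]. repeat split; auto; try lra.
    pose proof (ell_half_height p HB (proj2 Hp) Hy). lra.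
  - pose proof (sqrt_pos (B - A)). lra.
  - intros y _ _. pose proof (Rmin_l (sqrt (B - A)) ((B - A) / sqrt (B - k * (IZR y - y1) ^ 2))).
    lra.
Qed.

(* With [w = y - y1], [B - k w^2 = k (s - w) (s + w) >= (j + 1) s]. *)
Lemma ell_row_width_below_cap (j : nat) (y : Z) :
  0 <= B -> y1 <= IZR y <= y1 + s - 1 - INR j ->
  (B - A) / sqrt (B - k * (IZR y - y1) ^ 2) <= (B - A) / sqrt s * / sqrt (INR (S j)).
Proof.
  intros HB Hy. rewrite S_INR. pose proof (pos_INR j). set (w := IZR y - y1).
  assert (Hw : 0 <= w <= s - 1 - INR j) by (unfold w; lra).
  assert (Hhi : (INR j + 1) * s <= B - k * w ^ 2).
  { rewrite <- (ell_radius_sq HB).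
    assert (0 <= (s - w - (INR j + 1)) * (s + w)) by (apply Rmult_le_pos; lra).
    assert (0 <= (INR j + 1) * w) by (apply Rmult_le_pos; lra).
    assert (0 <= (k - 1) * ((s - w) * (s + w))) by (apply Rmult_le_pos; nra). nra. }
  assert (0 < sqrt (INR j + 1)) by (apply sqrt_lt_R0; lra).
  assert (0 < sqrt s) by (apply sqrt_lt_R0; lra).
  assert (sqrt (INR j + 1) * sqrt s <= sqrt (B - k * w ^ 2)).
  { rewrite <- sqrt_mult by lra. apply sqrt_le_1_alt. lra. }
  replace ((B - A) / sqrt s * / sqrt (INR j + 1)) with ((B - A) / (sqrt (INR j + 1) * sqrt s))
    by (field; lra).
  unfold Rdiv. apply Rmult_le_compat_l; [lra|]. apply Rinv_le_contravar; nra.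
Qed.

Lemma card_le_ell_body :
  0 <= B ->
  card_le (fun p => A <= ell a k y1 x0 p <= B /\ y1 <= IZR (snd p) <= y1 + s - 1)
    (12 * s + 12 * (B - A)).
Proof.
  intros HB. set (D := B - A). assert (HD : 0 <= D) by (unfold D; lra).
  assert (Hs0 : 0 <= s) by apply sqrt_pos.
  destruct (Rlt_le_dec s 1) as [Hs|Hs].
  { apply card_le_empty; [|lra]. intros p [_ Hy]. lra. }
  assert (Hsq : 0 < sqrt s) by (apply sqrt_lt_R0; lra).
  destruct (nat_floor_spec (s - 1)) as [Hn _]; [lra|]. set (n := nat_floor (s - 1)) in *.
  set (X := fun j => 4 + 2 * (D / sqrt s * / sqrt (INR (S j)))).
  assert (HX : forall j, 0 <= X j).
  { intros j. pose proof (sqrt_lt_R0 (INR (S j)) (lt_0_INR _ (Nat.lt_0_succ j))).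
    assert (0 <= D / sqrt s * / sqrt (INR (S j))).
    { apply Rle_mult_inv_pos; [apply Rle_mult_inv_pos|]; lra. }
    unfold X. lra. }
  apply card_le_weaken with (sum_f_R0 (fun j => 3 * X j) n).
  - replace (sum_f_R0 _ n) with
      (12 * INR (S n) + 6 * (D / sqrt s) * sum_f_R0 (fun j => / sqrt (INR (S j))) n).
    2:{ rewrite <- sum_cte, scal_sum, <- sum_plus. apply sum_eq. intros j _. unfold X. ring. }
    pose proof (sum_inv_sqrt_le n). rewrite S_INR in *.
    assert (sqrt (INR n + 1) <= sqrt s) by (apply sqrt_le_1_alt; lra).
    assert (0 <= D / sqrt s) by (apply Rle_mult_inv_pos; lra).
    assert (D / sqrt s * sqrt s = D) by (field; lra). nra.
  - apply card_le_cover with (idx := fun p : Z * Z => nat_floor (y1 + s - 1 - IZR (snd p))).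
    + intros p [_ Hy]. apply nat_floor_le. lra.
    + intros j Hj.
      eapply card_le_sub; [|apply (card_le_ell_strip (y1 + s - 2 - INR j) (X j) (HX j))].
      * intros p [[Hp Hy] Ej].
        destruct (nat_floor_spec (y1 + s - 1 - IZR (snd p))) as [Hj1 Hj2]; [lra|].
        rewrite Ej in Hj1, Hj2. repeat split; lra.
      * intros y Hy Hy1. pose proof (ell_row_width_below_cap j y HB ltac:(lra)).
        pose proof (Rmin_r (sqrt D) (D / sqrt (B - k * (IZR y - y1) ^ 2))).
        unfold X. fold D in H |- *. lra.
Qed.

Lemma card_le_ell_half :
  card_le (fun p => A <= ell a k y1 x0 p <= B /\ y1 <= IZR (snd p)) (18 * (1 + sqrt B + (B - A))).
Proof.
  pose proof (sqrt_pos (B - A)). pose proof (sqrt_pos B).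
  destruct (Rlt_le_dec B 0) as [HB|HB].
  { apply card_le_empty; [|lra]. intros p [[_ Hp] _]. unfold ell in Hp.
    pose proof (pow2_ge_0 (IZR (fst p) - x0 (IZR (snd p)))).
    pose proof (pow2_ge_0 (IZR (snd p) - y1)). nra. }
  assert (Hs : s <= sqrt B).
  { apply sqrt_le_1_alt. apply Rmult_le_reg_l with k; [lra|].
    replace (k * (B / k)) with B by (field; lra). nra. }
  assert (sqrt (B - A) <= (1 + (B - A)) / 2).
  { pose proof (sqrt_sqrt (B - A) ltac:(lra)). pose proof (pow2_ge_0 (sqrt (B - A) - 1)). nra. }
  apply card_le_weaken with (3 * (4 + 2 * sqrt (B - A)) + (12 * s + 12 * (B - A))); [lra|].
  apply card_le_union with
    (fun p => A <= ell a k y1 x0 p <= B /\ y1 <= IZR (snd p) /\ y1 + s - 1 <= IZR (snd p))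
    (fun p => A <= ell a k y1 x0 p <= B /\ y1 <= IZR (snd p) <= y1 + s - 1).
  - intros p [Hp Hy].
    destruct (Rle_lt_dec (y1 + s - 1) (IZR (snd p))); [left|right]; repeat split; auto; lra.
  - apply card_le_ell_cap; auto.
  - apply card_le_ell_body; auto.
Qed.

End EllipseAnnulus.

Lemma card_le_ell_annulus a k y1 A B (x0 : R -> R) :
  1 <= a -> 1 <= k -> A <= B ->
  card_le (fun p => A <= ell a k y1 x0 p <= B) (36 * (1 + sqrt B + (B - A))).
Proof.
  intros Ha Hk HAB. replace 36 with (18 + 18) by ring. rewrite Rmult_plus_distr_r.
  apply card_le_union with
    (fun p => A <= ell a k y1 x0 p <= B /\ y1 <= IZR (snd p))
    (fun p => A <= ell a k y1 x0 p <= B /\ IZR (snd p) <= y1).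
  - intros p Hp. destruct (Rle_lt_dec y1 (IZR (snd p))); [left|right]; split; auto; lra.
  - apply card_le_ell_half; auto.
  - apply card_le_inj with (g := fun p : Z * Z => (fst p, (- snd p)%Z))
      (Q := fun p => A <= ell a k (- y1) (fun t => x0 (- t)) p <= B /\ - y1 <= IZR (snd p)).
    + intros [x1 y1'] [x2 y2'] _ _ E. injection E. intros. f_equal; lia.
    + intros [x y] [Hp Hy]. unfold ell in *. cbn [fst snd] in *. rewrite opp_IZR, Ropp_involutive.
      replace ((- IZR y - - y1) ^ 2) with ((IZR y - y1) ^ 2) by ring. split; [auto|lra].
    + apply card_le_ell_half; auto.
Qed.

(* [|(x, y, t)|^2] for the point of the plane [al x + be y + t = ga] above [(x, y)]. *)
Definition plane_sq_norm (al be ga x y : R) : R := x ^ 2 + y ^ 2 + (ga - al * x - be * y) ^ 2.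

Lemma card_le_plane_annulus al be ga A B :
  A <= B ->
  card_le (fun p : Z * Z => A <= plane_sq_norm al be ga (IZR (fst p)) (IZR (snd p)) <= B)
    (36 * (1 + sqrt B + (B - A))).
Proof.
  intros HAB. set (a := 1 + al ^ 2). set (k := 1 + be ^ 2 / a).
  assert (Ha : 1 <= a) by (unfold a; nra).
  assert (0 <= be ^ 2 / a) by (apply Rle_mult_inv_pos; nra).
  assert (Hk : 1 <= k) by (unfold k; lra).
  set (x0 := fun y => al * (ga - be * y) / a). set (y1 := be * ga / (a * k)).
  set (R0 := ga ^ 2 / (a * k)). assert (HR0 : 0 <= R0) by (apply Rle_mult_inv_pos; nra).
  assert (Hdec : forall p : Z * Z,
    plane_sq_norm al be ga (IZR (fst p)) (IZR (snd p)) = ell a k y1 x0 p + R0).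
  { intros p. unfold plane_sq_norm, ell, x0, y1, R0, k, a in *. field. split; nra. }
  apply card_le_weaken with (36 * (1 + sqrt (B - R0) + (B - R0 - (A - R0)))).
  { assert (sqrt (B - R0) <= sqrt B) by (apply sqrt_le_1_alt; lra). lra. }
  apply card_le_sub with (fun p => A - R0 <= ell a k y1 x0 p <= B - R0).
  - intros p Hp. rewrite Hdec in Hp. lra.
  - apply card_le_ell_annulus; lra.
Qed.

Definition dot (u v : Z3) : R :=
  match u, v with
  | (a1, a2, a3), (b1, b2, b3) => IZR a1 * IZR b1 + IZR a2 * IZR b2 + IZR a3 * IZR b3
  end.

Definition vopp (v : Z3) : Z3 :=
  match v with (a1, a2, a3) => ((- a1)%Z, (- a2)%Z, (- a3)%Z) end.

Definition supnorm (v : Z3) : Z :=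
  match v with (a1, a2, a3) => Z.max (Z.abs a1) (Z.max (Z.abs a2) (Z.abs a3)) end.

Ltac z3_eq :=
  repeat match goal with v : Z3 |- _ => destruct v as [[? ?] ?] end;
  simpl; f_equal; [f_equal|]; ring.

Lemma dot_self_ge0 v : 0 <= dot v v.
Proof. destruct v as [[a b] c]. simpl. nra. Qed.

Lemma znorm_ge0 v : 0 <= znorm v.
Proof. destruct v as [[a b] c]. apply sqrt_pos. Qed.

Lemma znorm_sq v : znorm v ^ 2 = dot v v.
Proof.
  pose proof (dot_self_ge0 v). destruct v as [[a b] c]. cbn [znorm dot] in *.
  rewrite pow2_sqrt by nra. ring.
Qed.

Lemma znorm_sq_add u v : znorm (vadd u v) ^ 2 = znorm u ^ 2 + 2 * dot u v + znorm v ^ 2.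
Proof.
  rewrite !znorm_sq. destruct u as [[a1 a2] a3], v as [[b1 b2] b3]. cbn [vadd dot].
  rewrite !plus_IZR. ring.
Qed.

Lemma dot_le_znorm u v : dot u v <= znorm u * znorm v.
Proof.
  assert (Hsq : dot u v ^ 2 <= (znorm u * znorm v) ^ 2).
  { rewrite Rpow_mult_distr, !znorm_sq. destruct u as [[a1 a2] a3], v as [[b1 b2] b3]. cbn [dot].
    pose proof (pow2_ge_0 (IZR a1 * IZR b2 - IZR a2 * IZR b1)).
    pose proof (pow2_ge_0 (IZR a1 * IZR b3 - IZR a3 * IZR b1)).
    pose proof (pow2_ge_0 (IZR a2 * IZR b3 - IZR a3 * IZR b2)). nra. }
  pose proof (znorm_ge0 u). pose proof (znorm_ge0 v).
  assert (0 <= znorm u * znorm v) by nra.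
  destruct (Rle_lt_dec (dot u v) (znorm u * znorm v)); auto. nra.
Qed.

Lemma znorm_triangle u v : znorm (vadd u v) <= znorm u + znorm v.
Proof.
  pose proof (znorm_sq_add u v). pose proof (dot_le_znorm u v).
  pose proof (znorm_ge0 u). pose proof (znorm_ge0 v). pose proof (znorm_ge0 (vadd u v)). nra.
Qed.

Lemma znorm_opp v : znorm (vopp v) = znorm v.
Proof. destruct v as [[a b] c]. cbn [vopp znorm]. rewrite !opp_IZR. f_equal. ring. Qed.

Lemma jb_opp v : jb (vopp v) = jb v.
Proof. unfold jb. rewrite znorm_opp. reflexivity. Qed.

Lemma jb_bounds v : znorm v <= jb v <= znorm v + 1.
Proof.
  pose proof (znorm_ge0 v). assert (Hj : jb v ^ 2 = 1 + znorm v ^ 2).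
  { unfold jb. rewrite pow2_sqrt; nra. }
  assert (0 <= jb v) by apply sqrt_pos. split; nra.
Qed.

Lemma coord_le_znorm a b c :
  Rabs (IZR a) <= znorm (a, b, c) /\ Rabs (IZR b) <= znorm (a, b, c) /\
  Rabs (IZR c) <= znorm (a, b, c).
Proof.
  pose proof (znorm_sq (a, b, c)). pose proof (znorm_ge0 (a, b, c)). cbn [dot] in H.
  set (n := znorm (a, b, c)) in *.
  repeat split; rewrite <- (sqrt_pow2 n) by auto; rewrite <- sqrt_Rsqr_abs;
    apply sqrt_le_1_alt; unfold Rsqr; nra.
Qed.

Lemma supnorm_ge0 v : (0 <= supnorm v)%Z.
Proof. destruct v as [[a b] c]. cbn. lia. Qed.

Lemma supnorm_le_znorm v : IZR (supnorm v) <= znorm v.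
Proof.
  destruct v as [[a b] c]. destruct (coord_le_znorm a b c) as (Ha & Hb & Hc).
  rewrite <- !abs_IZR in Ha, Hb, Hc. cbn [supnorm].
  apply Z.max_case; [|apply Z.max_case]; auto.
Qed.

Lemma znorm_le_supnorm v : znorm v <= 2 * IZR (supnorm v).
Proof.
  pose proof (znorm_sq v). pose proof (znorm_ge0 v).
  destruct v as [[a b] c]. cbn [supnorm dot] in *.
  set (s := Z.max (Z.abs a) (Z.max (Z.abs b) (Z.abs c))).
  assert (Hs : forall z, (Z.abs z <= s)%Z -> IZR z ^ 2 <= IZR s ^ 2).
  { intros z Hz. rewrite <- (pow2_abs (IZR z)), <- abs_IZR. apply pow_incr.
    split; [apply IZR_le; lia|apply IZR_le; auto]. }
  assert (0 <= IZR s) by (apply IZR_le; unfold s; lia).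
  pose proof (Hs a ltac:(unfold s; lia)). pose proof (Hs b ltac:(unfold s; lia)).
  pose proof (Hs c ltac:(unfold s; lia)). nra.
Qed.

Lemma supnorm_ge1 v : v <> (0%Z, 0%Z, 0%Z) -> 1 <= IZR (supnorm v).
Proof.
  intros Hv. apply IZR_le. destruct v as [[a b] c]. cbn [supnorm].
  destruct (Z.eq_dec a 0), (Z.eq_dec b 0), (Z.eq_dec c 0); subst; try lia. contradiction.
Qed.

Lemma card_le_Z3 (P1 P2 P3 : Z -> Prop) X1 X2 X3 :
  card_le P1 X1 -> card_le P2 X2 -> card_le P3 X3 ->
  card_le (fun v : Z3 => let '(a, b, c) := v in P1 a /\ P2 b /\ P3 c) (X1 * X2 * X3).
Proof.
  intros H1 H2 H3. eapply card_le_sub; [|apply card_le_prod; [apply card_le_prod|]; eauto].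
  intros [[a b] c]. simpl. tauto.
Qed.

Lemma Rabs_le_eq x y a : x = y -> Rabs y <= a -> Rabs x <= a.
Proof. intros ->. auto. Qed.

Lemma Rabs_le_bounds x a : Rabs x <= a -> - a <= x <= a.
Proof.
  intros H. pose proof (Rle_abs x). pose proof (Rle_abs (- x)). rewrite Rabs_Ropp in *. lra.
Qed.

Lemma card_le_ball R : 0 <= R -> card_le (fun v : Z3 => znorm v <= R) ((2 * R + 2) ^ 3).
Proof.
  intros HR. replace ((2 * R + 2) ^ 3) with ((R - - R + 2) * (R - - R + 2) * (R - - R + 2)) by ring.
  eapply card_le_sub; [|apply card_le_Z3; apply card_le_Z_interval; lra].
  intros [[a b] c] H. destruct (coord_le_znorm a b c) as (Ha & Hb & Hc).
  pose proof (Rabs_le_bounds (IZR a) R ltac:(lra)). pose proof (Rabs_le_bounds (IZR b) R ltac:(lra)).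
  pose proof (Rabs_le_bounds (IZR c) R ltac:(lra)). repeat split; lra.
Qed.

Lemma card_le_supnorm_sphere (k : nat) :
  card_le (fun v : Z3 => supnorm v = Z.of_nat k) (48 * (INR k + 1) ^ 2).
Proof.
  set (K := IZR (Z.of_nat k)). assert (HK : K = INR k) by (unfold K; rewrite <- INR_IZR_INZ; auto).
  assert (HK0 : 0 <= K) by (rewrite HK; apply pos_INR).
  assert (Hle : card_le (fun z : Z => (Z.abs z <= Z.of_nat k)%Z) (2 * INR k + 2)).
  { rewrite <- HK. replace (2 * K + 2) with (K - - K + 2) by ring.
    eapply card_le_sub; [|apply card_le_Z_interval; lra].
    intros z Hz. unfold K. rewrite <- opp_IZR. split; apply IZR_le; lia. }
  assert (Heq : card_le (fun z : Z => Z.abs z = Z.of_nat k) 4).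
  { replace 4 with ((K - K + 2) + (- K - - K + 2)) by ring.
    apply card_le_union with (fun z : Z => K <= IZR z <= K) (fun z : Z => - K <= IZR z <= - K).
    - intros z Hz. unfold K. rewrite <- opp_IZR.
      destruct (Z.abs_spec z) as [[_ E]|[_ E]]; [left|right]; split; apply IZR_le; lia.
    - apply card_le_Z_interval; lra.
    - apply card_le_Z_interval; lra. }
  replace (48 * (INR k + 1) ^ 2) with
    (4 * (2 * INR k + 2) * (2 * INR k + 2) +
     ((2 * INR k + 2) * 4 * (2 * INR k + 2) + (2 * INR k + 2) * (2 * INR k + 2) * 4)) by ring.
  apply card_le_union with
    (fun v : Z3 => let '(a, b, c) := v in
       Z.abs a = Z.of_nat k /\ (Z.abs b <= Z.of_nat k)%Z /\ (Z.abs c <= Z.of_nat k)%Z)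
    (fun v : Z3 => (let '(a, b, c) := v in
       (Z.abs a <= Z.of_nat k)%Z /\ Z.abs b = Z.of_nat k /\ (Z.abs c <= Z.of_nat k)%Z) \/
     (let '(a, b, c) := v in
       (Z.abs a <= Z.of_nat k)%Z /\ (Z.abs b <= Z.of_nat k)%Z /\ Z.abs c = Z.of_nat k)).
  - intros [[a b] c] H. cbn [supnorm] in H. lia.
  - apply card_le_Z3; auto.
  - apply card_le_union with (2 := card_le_Z3 _ _ _ _ _ _ Hle Heq Hle)
      (3 := card_le_Z3 _ _ _ _ _ _ Hle Hle Heq); auto.
Qed.

(** * Shells, slabs and level sets *)

Lemma slab_third_coord (u1 u2 u3 x y t : Z) (H : R) :
  u3 <> 0%Z -> H <= dot (u1, u2, u3) (x, y, t) <= H + Rabs (IZR u3) ->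
  Rabs (IZR t - (H / IZR u3 - IZR u1 / IZR u3 * IZR x - IZR u2 / IZR u3 * IZR y)) <= 1.
Proof.
  intros Hu Hdot. cbn [dot] in Hdot. assert (Hu' : IZR u3 <> 0) by (apply not_0_IZR; auto).
  replace (IZR t - _) with ((IZR u1 * IZR x + IZR u2 * IZR y + IZR u3 * IZR t - H) / IZR u3)
    by (field; auto).
  unfold Rdiv. rewrite Rabs_mult, Rabs_inv, Rabs_pos_eq by lra.
  apply Rmult_le_reg_r with (Rabs (IZR u3)); [apply Rabs_pos_lt; auto|].
  rewrite Rmult_assoc, Rinv_l by (apply Rabs_no_R0; auto). lra.
Qed.

Lemma shell_slab_plane_sq_norm (u1 u2 u3 x y t : Z) (r H : R) :
  u3 <> 0%Z -> 0 <= r -> r <= znorm (x, y, t) <= r + 1 ->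
  H <= dot (u1, u2, u3) (x, y, t) <= H + Rabs (IZR u3) ->
  r ^ 2 - 2 * r - 3 <=
  plane_sq_norm (IZR u1 / IZR u3) (IZR u2 / IZR u3) (H / IZR u3) (IZR x) (IZR y) <= (r + 2) ^ 2.
Proof.
  intros Hu Hr Hn Hd. pose proof (slab_third_coord _ _ _ _ _ _ _ Hu Hd) as Ht.
  destruct (coord_le_znorm x y t) as (_ & _ & Htr).
  assert (Htr' : Rabs (IZR t) <= r + 1) by lra. apply Rabs_le_bounds in Htr'.
  pose proof (znorm_sq (x, y, t)) as Hsq. cbn [dot] in Hsq.
  unfold plane_sq_norm.
  set (t0 := H / IZR u3 - IZR u1 / IZR u3 * IZR x - IZR u2 / IZR u3 * IZR y) in *.
  set (e := IZR t - t0) in Ht. apply Rabs_le_bounds in Ht.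
  replace (t0 ^ 2) with (IZR t ^ 2 - 2 * (IZR t * e) + e ^ 2) by (unfold e; ring).
  assert (- (r + 1) <= IZR t * e <= r + 1) by nra.
  assert (e ^ 2 <= 1) by nra. pose proof (pow2_ge_0 e). nra.
Qed.

(* Each fibre of [(v1, v2)] has at most four points, and the fibres lie over a planar annulus
   of width [O(r)]. *)
Lemma card_le_shell_thin_slab (u1 u2 u3 : Z) (r H : R) :
  u3 <> 0%Z -> 0 <= r ->
  card_le (fun v => r <= znorm v <= r + 1 /\ H <= dot (u1, u2, u3) v <= H + Rabs (IZR u3))
    (1440 * (r + 1)).
Proof.
  intros Hu Hr. set (al := IZR u1 / IZR u3). set (be := IZR u2 / IZR u3). set (ga := H / IZR u3).
  apply card_le_weaken with
    (36 * (1 + sqrt ((r + 2) ^ 2) + ((r + 2) ^ 2 - (r ^ 2 - 2 * r - 3))) * 4).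
  { rewrite sqrt_pow2 by lra. lra. }
  apply card_le_fiber with (f := fun v : Z3 => (fst (fst v), snd (fst v))); [lra| |].
  - eapply card_le_sub; [|apply (card_le_plane_annulus al be ga); nra].
    intros [x y] [[[x' y'] t] [[Hn Hd] E]]. injection E as -> ->.
    apply shell_slab_plane_sq_norm with t; auto.
  - intros [x y]. set (t0 := ga - al * IZR x - be * IZR y).
    apply card_le_inj with (g := fun v : Z3 => snd v) (Q := fun t : Z => t0 - 1 <= IZR t <= t0 + 1).
    + intros [[x1 y1] t1] [[x2 y2] t2] [_ E1] [_ E2] Et. cbn in E1, E2, Et. congruence.
    + intros [[x' y'] t] [[_ Hd] E]. injection E as -> ->. cbn [snd].
      apply (slab_third_coord _ _ _ _ _ _ _ Hu), Rabs_le_bounds in Hd. fold al be ga t0 in Hd. lra.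
    + replace 4 with (t0 + 1 - (t0 - 1) + 2) by ring. apply card_le_Z_interval. lra.
Qed.

Lemma card_le_shell_slab_third (u1 u2 u3 : Z) (r H W : R) :
  u3 <> 0%Z -> 0 <= r -> 0 <= W ->
  card_le (fun v => r <= znorm v <= r + 1 /\ H <= dot (u1, u2, u3) v <= H + W)
    ((W / Rabs (IZR u3) + 1) * (1440 * (r + 1))).
Proof.
  intros Hu Hr HW. apply card_le_slices; auto.
  - apply Rabs_pos_lt, not_0_IZR; auto.
  - intros h _. apply card_le_shell_thin_slab; auto.
Qed.

Lemma card_le_shell_slab_perm (sigma : Z3 -> Z3) (u : Z3) r H W X :
  (forall v w, sigma v = sigma w -> v = w) ->
  (forall v, znorm (sigma v) = znorm v) -> (forall v w, dot (sigma v) (sigma w) = dot v w) ->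
  card_le (fun v => r <= znorm v <= r + 1 /\ H <= dot (sigma u) v <= H + W) X ->
  card_le (fun v => r <= znorm v <= r + 1 /\ H <= dot u v <= H + W) X.
Proof.
  intros Hinj Hn Hd. apply card_le_inj with (g := sigma); [auto|].
  intros v. rewrite Hn, Hd. auto.
Qed.

Ltac perm_z3 :=
  intros; repeat match goal with v : Z3 |- _ => destruct v as [[? ?] ?] end;
  cbn in *; first [congruence | ring | f_equal; ring].

Lemma card_le_shell_slab (u : Z3) (r H W : R) :
  u <> (0%Z, 0%Z, 0%Z) -> 0 <= r -> 0 <= W ->
  card_le (fun v => r <= znorm v <= r + 1 /\ H <= dot u v <= H + W)
    ((W / IZR (supnorm u) + 1) * (1440 * (r + 1))).
Proof.
  intros Hu Hr HW. pose proof (supnorm_ge1 u Hu) as Hs.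
  destruct u as [[a b] c].
  assert (Hmax : supnorm (a, b, c) = Z.abs c \/ supnorm (a, b, c) = Z.abs b \/
                 supnorm (a, b, c) = Z.abs a) by (cbn; lia).
  destruct Hmax as [E|[E|E]]; rewrite E, abs_IZR in *.
  - apply card_le_shell_slab_third; auto. intros ->. rewrite Rabs_R0 in Hs. lra.
  - apply (card_le_shell_slab_perm (fun v => let '(x, y, z) := v in (x, z, y))); [perm_z3..|].
    apply card_le_shell_slab_third; auto. intros ->. rewrite Rabs_R0 in Hs. lra.
  - apply (card_le_shell_slab_perm (fun v => let '(x, y, z) := v in (z, y, x))); [perm_z3..|].
    apply card_le_shell_slab_third; auto. intros ->. rewrite Rabs_R0 in Hs. lra.
Qed.

Lemma level_set_norm_window u v (sg tau : bool) b r :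
  r <= znorm v <= r + 1 -> Rabs (sgn sg * jb (vadd u v) + sgn tau * jb v - b) <= 1 ->
  sgn sg * (b - sgn tau * (r + 1)) - 3 <= znorm (vadd u v) <= sgn sg * (b - sgn tau * (r + 1)) + 2.
Proof.
  intros Hv Hres. apply Rabs_le_bounds in Hres.
  pose proof (jb_bounds v). pose proof (jb_bounds (vadd u v)).
  destruct sg, tau; cbn [sgn] in *; split; lra.
Qed.

Lemma dot_window u v rho r :
  0 <= r -> r <= znorm v <= r + 1 -> rho <= znorm (vadd u v) <= rho + 5 ->
  (Rmax rho 0 ^ 2 - znorm u ^ 2 - (r + 1) ^ 2) / 2 <= dot u v <=
  (Rmax rho 0 ^ 2 - znorm u ^ 2 - (r + 1) ^ 2) / 2 + (5 * znorm u + 6 * r + 18).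
Proof.
  intros Hr Hv Huv. pose proof (znorm_sq_add u v) as Hsq. pose proof (znorm_triangle u v).
  pose proof (znorm_ge0 u). pose proof (znorm_ge0 (vadd u v)).
  set (S := znorm (vadd u v)) in *.
  assert (Hlo : Rmax rho 0 ^ 2 <= S ^ 2).
  { apply pow_incr. split; [apply Rmax_r|apply Rmax_lub; lra]. }
  assert (Hhi : S ^ 2 <= (rho + 5) ^ 2) by (apply pow_incr; lra).
  assert (znorm v ^ 2 <= (r + 1) ^ 2) by (apply pow_incr; lra).
  assert (r ^ 2 <= znorm v ^ 2) by (apply pow_incr; lra).
  assert ((rho + 5) ^ 2 - Rmax rho 0 ^ 2 <= 10 * znorm u + 10 * r + 35).
  { destruct (Rle_lt_dec 0 rho).
    - rewrite Rmax_left by lra. nra.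
    - rewrite Rmax_right by lra. nra. }
  split; lra.
Qed.

Lemma card_le_level_set_shell u (sg tau : bool) b r :
  u <> (0%Z, 0%Z, 0%Z) -> 0 <= r ->
  card_le (fun v => Rabs (sgn sg * jb (vadd u v) + sgn tau * jb v - b) <= 1 /\
                    r <= znorm v <= r + 1)
    (((5 * znorm u + 6 * r + 18) / IZR (supnorm u) + 1) * (1440 * (r + 1))).
Proof.
  intros Hu Hr. set (rho := sgn sg * (b - sgn tau * (r + 1)) - 3).
  set (H := (Rmax rho 0 ^ 2 - znorm u ^ 2 - (r + 1) ^ 2) / 2).
  eapply card_le_sub; [|apply (card_le_shell_slab u r H); auto].
  - intros v [Hres Hv]. split; auto. apply dot_window; auto.
    pose proof (level_set_norm_window u v sg tau b r Hv Hres). unfold rho. split; lra.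
  - pose proof (znorm_ge0 u). lra.
Qed.

Lemma card_le_level_set u (sg tau : bool) b M :
  1 <= M ->
  card_le (fun v => Rabs (sgn sg * jb (vadd u v) + sgn tau * jb v - b) <= 1 /\ znorm v <= M)
    (276480 * (M ^ 2 + M ^ 3 / (1 + IZR (supnorm u)))).
Proof.
  intros HM. assert (HM3 : 0 <= M ^ 3) by (apply pow_le; lra).
  assert (HM2 : 0 <= M ^ 2) by (apply pow_le; lra).
  destruct (classic (u = (0%Z, 0%Z, 0%Z))) as [->|Hu].
  { change (supnorm (0%Z, 0%Z, 0%Z)) with 0%Z. rewrite Rplus_0_r, Rdiv_1_r.
    apply card_le_weaken with ((2 * M + 2) ^ 3).
    { assert ((2 * M + 2) ^ 3 <= (4 * M) ^ 3) by (apply pow_incr; lra). nra. }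
    eapply card_le_sub; [|apply (card_le_ball M); lra]. intros v [_ Hv]. auto. }
  pose proof (supnorm_ge1 u Hu) as Hs. pose proof (znorm_le_supnorm u) as Hus.
  set (s := IZR (supnorm u)) in *.
  assert (HMs : 0 <= M / s) by (apply Rle_mult_inv_pos; lra).
  apply card_le_weaken with ((M / 1 + 1) * ((11 + 24 * (M / s)) * (2880 * M))).
  { rewrite Rdiv_1_r.
    assert (M ^ 3 / s <= 2 * (M ^ 3 / (1 + s))).
    { unfold Rdiv. rewrite <- Rmult_assoc, (Rmult_comm 2), Rmult_assoc.
      apply Rmult_le_compat_l; auto.
      apply Rmult_le_reg_l with (s * (1 + s)); [nra|]. field_simplify; lra. }
    replace ((M + 1) * ((11 + 24 * (M / s)) * (2880 * M))) with
      (2880 * (M + 1) * M * 11 + 69120 * (M + 1) * (M ^ 2 / s)) by (field; lra).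
    assert (M ^ 3 / s = M * (M ^ 2 / s)) by (field; lra).
    assert (0 <= M ^ 2 / s) by (apply Rle_mult_inv_pos; lra). nra. }
  eapply card_le_sub;
    [|apply (card_le_slices (fun v => Rabs (sgn sg * jb (vadd u v) + sgn tau * jb v - b) <= 1)
            znorm 0 M 1); [lra|lra|]].
  { intros v [Hres Hv]. pose proof (znorm_ge0 v). split; [auto|split; lra]. }
  intros h Hh. eapply card_le_weaken; [|apply card_le_level_set_shell; auto; lra]. fold s.
  assert (Hq : (5 * znorm u + 6 * h + 18) / s <= 10 + 24 * (M / s)).
  { apply Rmult_le_reg_r with s; [lra|].
    replace ((5 * znorm u + 6 * h + 18) / s * s) with (5 * znorm u + 6 * h + 18) by (field; lra).
    replace ((10 + 24 * (M / s)) * s) with (10 * s + 24 * M) by (field; lra). lra. }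
  assert (0 <= (5 * znorm u + 6 * h + 18) / s).
  { apply Rle_mult_inv_pos; pose proof (znorm_ge0 u); lra. }
  apply Rmult_le_compat; lra.
Qed.

(** * Resonant triples and the four estimates *)

Definition resonant_triple (Ra Rb M : R) (sg tau : bool) (F : Z3 -> Z3 -> R) (m : R)
    (t : Z3 * Z3 * Z3) : Prop :=
  let '(a, b, v) := t in
  znorm a <= Ra /\ znorm b <= Rb /\ znorm v <= M /\
  Rabs (sgn sg * jb (vadd a v) + sgn tau * jb v + F a b - m) <= 1.

Lemma card_le_resonant_triple_at Ra Rb M sg tau F m (k : nat) :
  1 <= Rb -> 1 <= M ->
  card_le (fun t => resonant_triple Ra Rb M sg tau F m t /\ Z.to_nat (supnorm (fst (fst t))) = k)
    (48 * (INR k + 1) ^ 2 * (2 * Rb + 2) ^ 3 * (276480 * (M ^ 2 + M ^ 3 / (1 + INR k)))).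
Proof.
  intros HRb HM. assert (HZ : 0 <= 276480 * (M ^ 2 + M ^ 3 / (1 + INR k))).
  { assert (0 <= M ^ 3 / (1 + INR k)).
    { apply Rle_mult_inv_pos; [apply pow_le|pose proof (pos_INR k)]; lra. }
    pose proof (pow_le M 2 ltac:(lra)). lra. }
  apply card_le_fiber with (f := fun t : Z3 * Z3 * Z3 => fst t); [exact HZ| |].
  - eapply card_le_sub; [|apply card_le_prod; [apply card_le_supnorm_sphere|apply card_le_ball; lra]].
    intros [a b] [[[a' b'] v] [[Ht Ek] E]]. injection E as -> ->. destruct Ht as (_ & Hb & _).
    cbn [fst snd] in *. pose proof (supnorm_ge0 a). split; [lia|auto].
  - intros [a b]. destruct (Nat.eq_dec (Z.to_nat (supnorm a)) k) as [Ek|Ek].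
    2:{ apply card_le_empty; [|exact HZ].
        intros [[a' b'] v] [[_ Ek'] E]. injection E as -> ->. auto. }
    replace (INR k) with (IZR (supnorm a))
      by (rewrite <- Ek, INR_IZR_INZ, Z2Nat.id; auto using supnorm_ge0).
    apply card_le_inj with (g := fun t : Z3 * Z3 * Z3 => snd t) (Q := fun v =>
      Rabs (sgn sg * jb (vadd a v) + sgn tau * jb v - (m - F a b)) <= 1 /\ znorm v <= M).
    + intros [[a1 b1] v1] [[a2 b2] v2] [_ E1] [_ E2] E. cbn in E1, E2, E. congruence.
    + intros [[a' b'] v] [[Ht _] E]. injection E as -> ->. destruct Ht as (_ & _ & Hv & Hres).
      cbn [snd]. split; [|auto]. eapply Rabs_le_eq; [|exact Hres]. ring.
    + apply card_le_level_set; auto.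
Qed.

Lemma resonant_triple_sum_le Ra Rb M p :
  1 <= Rb -> 1 <= M -> 1 <= p <= 2 * Ra ->
  p * (48 * 276480 * (2 * Rb + 2) ^ 3 * (p ^ 2 * M ^ 2 + p * M ^ 3)) <=
  6794772480 * Rb ^ 3 * Ra ^ 2 * M ^ 2 * (Ra + M).
Proof.
  intros HRb HM Hp.
  assert (H2 : 0 <= M ^ 2) by (apply pow_le; lra). assert (H3 : 0 <= M ^ 3) by (apply pow_le; lra).
  assert (Hsum : p * (p ^ 2 * M ^ 2 + p * M ^ 3) <= 8 * Ra ^ 2 * M ^ 2 * (Ra + M)).
  { assert (p ^ 3 <= (2 * Ra) ^ 3) by (apply pow_incr; lra).
    assert (p ^ 2 <= (2 * Ra) ^ 2) by (apply pow_incr; lra).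
    assert (p ^ 3 * M ^ 2 <= (2 * Ra) ^ 3 * M ^ 2) by (apply Rmult_le_compat_r; lra).
    assert (p ^ 2 * M ^ 3 <= (2 * Ra) ^ 2 * M ^ 3) by (apply Rmult_le_compat_r; lra).
    assert (0 <= Ra ^ 2 * M ^ 3) by (assert (0 <= Ra ^ 2) by (apply pow_le; lra); nra).
    replace (p * (p ^ 2 * M ^ 2 + p * M ^ 3)) with (p ^ 3 * M ^ 2 + p ^ 2 * M ^ 3) by ring.
    replace (8 * Ra ^ 2 * M ^ 2 * (Ra + M)) with
      ((2 * Ra) ^ 3 * M ^ 2 + 2 * ((2 * Ra) ^ 2 * M ^ 3)) by ring.
    nra. }
  assert ((2 * Rb + 2) ^ 3 <= (4 * Rb) ^ 3) by (apply pow_incr; lra).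
  assert (0 <= (2 * Rb + 2) ^ 3) by (apply pow_le; lra).
  assert (0 <= p * (p ^ 2 * M ^ 2 + p * M ^ 3)) by (apply Rmult_le_pos; nra).
  replace (p * (48 * 276480 * (2 * Rb + 2) ^ 3 * (p ^ 2 * M ^ 2 + p * M ^ 3))) with
    (13271040 * ((2 * Rb + 2) ^ 3 * (p * (p ^ 2 * M ^ 2 + p * M ^ 3)))) by ring.
  replace (6794772480 * Rb ^ 3 * Ra ^ 2 * M ^ 2 * (Ra + M)) with
    (13271040 * ((4 * Rb) ^ 3 * (8 * Ra ^ 2 * M ^ 2 * (Ra + M)))) by ring.
  apply Rmult_le_compat_l; [lra|]. apply Rmult_le_compat; auto.
Qed.

Lemma card_le_resonant_triple Ra Rb M sg tau F m :
  1 <= Ra -> 1 <= Rb -> 1 <= M ->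
  card_le (resonant_triple Ra Rb M sg tau F m) (6794772480 * Rb ^ 3 * Ra ^ 2 * M ^ 2 * (Ra + M)).
Proof.
  intros HRa HRb HM. destruct (nat_floor_spec Ra) as [Hn _]; [lra|].
  set (n := nat_floor Ra) in *. set (p := INR n + 1).
  assert (Hp : 1 <= p <= 2 * Ra) by (pose proof (pos_INR n); unfold p; lra).
  set (X := 48 * 276480 * (2 * Rb + 2) ^ 3 * (p ^ 2 * M ^ 2 + p * M ^ 3)).
  apply card_le_weaken with (INR (S n) * X).
  { rewrite S_INR. apply resonant_triple_sum_le; auto. }
  apply card_le_cover_uniform with
    (idx := fun t : Z3 * Z3 * Z3 => Z.to_nat (supnorm (fst (fst t)))).
  - intros [[a b] v] (Ha & _). apply Z_to_nat_le_nat_floor.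
    pose proof (supnorm_le_znorm a). cbn. lra.
  - intros k Hk. eapply card_le_weaken; [|apply card_le_resonant_triple_at; auto].
    apply le_INR in Hk. pose proof (pos_INR k). fold p in Hk.
    assert (E : (INR k + 1) ^ 2 * (M ^ 2 + M ^ 3 / (1 + INR k)) =
                (INR k + 1) ^ 2 * M ^ 2 + (INR k + 1) * M ^ 3) by (field; lra).
    assert ((INR k + 1) ^ 2 <= p ^ 2) by (apply pow_incr; unfold p; lra).
    assert (H2 : 0 <= M ^ 2) by (apply pow_le; lra).
    assert (H3 : 0 <= M ^ 3) by (apply pow_le; lra).
    assert (0 <= (2 * Rb + 2) ^ 3) by (apply pow_le; lra).
    assert ((INR k + 1) ^ 2 * M ^ 2 + (INR k + 1) * M ^ 3 <= p ^ 2 * M ^ 2 + p * M ^ 3)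
      by (unfold p in *; nra).
    unfold X.
    replace (48 * (INR k + 1) ^ 2 * (2 * Rb + 2) ^ 3 * (276480 * (M ^ 2 + M ^ 3 / (1 + INR k))))
      with (48 * 276480 * (2 * Rb + 2) ^ 3 * ((INR k + 1) ^ 2 * (M ^ 2 + M ^ 3 / (1 + INR k))))
      by ring.
    rewrite E. apply Rmult_le_compat_l; [lra|auto].
Qed.

Ltac triple_inj :=
  let E := fresh "E" in
  intros [[? ?] ?] [[? ?] ?] _ _ E;
  repeat match goal with v : Z3 |- _ => destruct v as [[? ?] ?] end;
  cbn in E; injection E; intros; repeat f_equal; lia.

Definition resonant (s123 s1 s2 s3 : bool) (m : R) (n : Z3 * Z3 * Z3) : Prop :=
  let '(n1, n2, n3) := n in Rabs (phi s123 s1 s2 s3 n1 n2 n3 - m) <= 1.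

Definition resonant_box (s123 s1 s2 s3 : bool) (R1 R2 R3 m : R) (n : Z3 * Z3 * Z3) : Prop :=
  let '(n1, n2, n3) := n in
  znorm n1 <= R1 /\ znorm n2 <= R2 /\ znorm n3 <= R3 /\ resonant s123 s1 s2 s3 m n.

Lemma card_le_resonant_box_max s123 s1 s2 s3 R1 R2 R3 m :
  1 <= R2 -> 1 <= R3 -> R2 <= R1 -> R3 <= R1 ->
  card_le (resonant_box s123 s1 s2 s3 R1 R2 R3 m) (12 * 6794772480 * R1 ^ 3 * R2 ^ 3 * R3 ^ 2).
Proof.
  intros HR2 HR3 H21 H31.
  apply card_le_weaken with (6794772480 * R2 ^ 3 * (2 * R1) ^ 2 * R3 ^ 2 * (2 * R1 + R3)).
  { assert (0 <= R2 ^ 3 * R1 ^ 2 * R3 ^ 2).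
    { apply Rmult_le_pos; [apply Rmult_le_pos|]; apply pow_le; lra. }
    replace (12 * 6794772480 * R1 ^ 3 * R2 ^ 3 * R3 ^ 2) with
      (4 * 6794772480 * (R2 ^ 3 * R1 ^ 2 * R3 ^ 2) * (3 * R1)) by ring.
    replace (6794772480 * R2 ^ 3 * (2 * R1) ^ 2 * R3 ^ 2 * (2 * R1 + R3)) with
      (4 * 6794772480 * (R2 ^ 3 * R1 ^ 2 * R3 ^ 2) * (2 * R1 + R3)) by ring.
    apply Rmult_le_compat_l; [lra|]. lra. }
  apply card_le_inj with
    (g := fun n : Z3 * Z3 * Z3 => let '(n1, n2, n3) := n in (vadd n1 n2, n2, n3))
    (Q := resonant_triple (2 * R1) R2 R3 s123 s3
            (fun a b => sgn s1 * jb (vadd a (vopp b)) + sgn s2 * jb b) m).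
  - triple_inj.
  - intros [[n1 n2] n3] (H1 & H2 & H3 & Hres). cbv beta iota delta [resonant_triple].
    assert (E : vadd (vadd n1 n2) (vopp n2) = n1) by z3_eq. rewrite E.
    pose proof (znorm_triangle n1 n2). repeat split; try lra.
    eapply Rabs_le_eq; [|exact Hres]. unfold phi. ring.
  - apply card_le_resonant_triple; lra.
Qed.

Lemma phi_swap12 s123 s1 s2 s3 n1 n2 n3 :
  phi s123 s2 s1 s3 n2 n1 n3 = phi s123 s1 s2 s3 n1 n2 n3.
Proof. unfold phi. replace (vadd (vadd n2 n1) n3) with (vadd (vadd n1 n2) n3) by z3_eq. ring. Qed.

Lemma phi_swap23 s123 s1 s2 s3 n1 n2 n3 :
  phi s123 s1 s3 s2 n1 n3 n2 = phi s123 s1 s2 s3 n1 n2 n3.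
Proof. unfold phi. replace (vadd (vadd n1 n3) n2) with (vadd (vadd n1 n2) n3) by z3_eq. ring. Qed.

Lemma phi_swap13 s123 s1 s2 s3 n1 n2 n3 :
  phi s123 s3 s2 s1 n3 n2 n1 = phi s123 s1 s2 s3 n1 n2 n3.
Proof. unfold phi. replace (vadd (vadd n3 n2) n1) with (vadd (vadd n1 n2) n3) by z3_eq. ring. Qed.

Lemma card_le_resonant_box_swap12 s123 s1 s2 s3 R1 R2 R3 m X :
  card_le (resonant_box s123 s2 s1 s3 R2 R1 R3 m) X ->
  card_le (resonant_box s123 s1 s2 s3 R1 R2 R3 m) X.
Proof.
  apply card_le_inj with (g := fun n : Z3 * Z3 * Z3 => let '(n1, n2, n3) := n in (n2, n1, n3)).
  - triple_inj.
  - intros [[n1 n2] n3]. cbv beta iota delta [resonant_box resonant]. rewrite phi_swap12. tauto.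
Qed.

Lemma card_le_resonant_box_swap23 s123 s1 s2 s3 R1 R2 R3 m X :
  card_le (resonant_box s123 s1 s3 s2 R1 R3 R2 m) X ->
  card_le (resonant_box s123 s1 s2 s3 R1 R2 R3 m) X.
Proof.
  apply card_le_inj with (g := fun n : Z3 * Z3 * Z3 => let '(n1, n2, n3) := n in (n1, n3, n2)).
  - triple_inj.
  - intros [[n1 n2] n3]. cbv beta iota delta [resonant_box resonant]. rewrite phi_swap23. tauto.
Qed.

Lemma card_le_resonant_box_swap13 s123 s1 s2 s3 R1 R2 R3 m X :
  card_le (resonant_box s123 s3 s2 s1 R3 R2 R1 m) X ->
  card_le (resonant_box s123 s1 s2 s3 R1 R2 R3 m) X.
Proof.
  apply card_le_inj with (g := fun n : Z3 * Z3 * Z3 => let '(n1, n2, n3) := n in (n3, n2, n1)).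
  - triple_inj.
  - intros [[n1 n2] n3]. cbv beta iota delta [resonant_box resonant]. rewrite phi_swap13. tauto.
Qed.

Lemma med_cases a b c :
  (med a b c = c /\ Rmin a b <= c <= Rmax a b) \/
  (med a b c = b /\ Rmin a c <= b <= Rmax a c) \/
  (med a b c = a /\ Rmin b c <= a <= Rmax b c).
Proof.
  unfold med, Rmax, Rmin.
  repeat match goal with
         | |- context [Rle_dec ?x ?y] => destruct (Rle_dec x y)
         | _ : context [Rle_dec ?x ?y] |- _ => destruct (Rle_dec x y)
         end; lra.
Qed.

Lemma med_rotate a b c : med a b c = med c a b.
Proof.
  unfold med, Rmax, Rmin.
  repeat match goal with
         | |- context [Rle_dec ?x ?y] => destruct (Rle_dec x y)
         | _ : context [Rle_dec ?x ?y] |- _ => destruct (Rle_dec x y)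
         end; lra.
Qed.

Lemma card_le_resonant_box_mid3 s123 s1 s2 s3 c N1 N2 N3 m :
  1 <= c -> 1 <= N1 -> 1 <= N2 -> 1 <= N3 -> Rmin N1 N2 <= N3 <= Rmax N1 N2 ->
  card_le (resonant_box s123 s1 s2 s3 (c * N1) (c * N2) (c * N3) m)
    (12 * 6794772480 * c ^ 8 * (N1 ^ 3 * N2 ^ 3 * N3 ^ 2)).
Proof.
  intros Hc H1 H2 H3 [Hlo Hhi]. unfold Rmin, Rmax in *. destruct (Rle_dec N1 N2) as [H12|H21].
  - apply card_le_resonant_box_swap12.
    eapply card_le_weaken; [|apply card_le_resonant_box_max; nra]. right. ring.
  - eapply card_le_weaken; [|apply card_le_resonant_box_max; nra]. right. ring.
Qed.

Lemma card_le_resonant_box s123 s1 s2 s3 c N1 N2 N3 m :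
  1 <= c -> 1 <= N1 -> 1 <= N2 -> 1 <= N3 ->
  card_le (resonant_box s123 s1 s2 s3 (c * N1) (c * N2) (c * N3) m)
    (12 * 6794772480 * c ^ 8 * / med N1 N2 N3 * (N1 * N2 * N3) ^ 3).
Proof.
  intros Hc H1 H2 H3.
  destruct (med_cases N1 N2 N3) as [[E Hm]|[[E Hm]|[E Hm]]]; rewrite E.
  - eapply card_le_weaken; [|apply card_le_resonant_box_mid3; auto]. right. field. lra.
  - apply card_le_resonant_box_swap23.
    eapply card_le_weaken; [|apply card_le_resonant_box_mid3; auto]. right. field. lra.
  - apply card_le_resonant_box_swap13.
    eapply card_le_weaken;
      [|apply card_le_resonant_box_mid3; auto; rewrite Rmin_comm, Rmax_comm; auto].
    right. field. lra.
Qed.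

Lemma sim_le c N n : 1 <= c -> 1 <= N -> sim c N n -> znorm n <= c * N.
Proof. intros Hc HN [[-> H]|(_ & _ & H)]; lra. Qed.

Lemma card_le_resonant_n1_n2_n3 c s123 s1 s2 s3 N1 N2 N3 m :
  1 <= c -> 1 <= N1 -> 1 <= N2 -> 1 <= N3 ->
  card_le (fun n : Z3 * Z3 * Z3 => let '(n1, n2, n3) := n in
             resonant s123 s1 s2 s3 m n /\ sim c N1 n1 /\ sim c N2 n2 /\ sim c N3 n3)
    (12 * 6794772480 * c ^ 8 * / med N1 N2 N3 * (N1 * N2 * N3) ^ 3).
Proof.
  intros Hc H1 H2 H3. eapply card_le_sub; [|apply card_le_resonant_box; auto].
  intros [[n1 n2] n3] (Hres & Hn1 & Hn2 & Hn3). cbv beta iota delta [resonant_box].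
  repeat split; try (apply sim_le; auto). exact Hres.
Qed.

Lemma card_le_resonant_n123_n1_n2 c s123 s1 s2 s3 N123 N1 N2 m :
  1 <= c -> 1 <= N123 -> 1 <= N1 -> 1 <= N2 ->
  card_le (fun n : Z3 * Z3 * Z3 => let '(n1, n2, n3) := n in
             resonant s123 s1 s2 s3 m n /\ sim c N123 (vadd (vadd n1 n2) n3) /\
             sim c N1 n1 /\ sim c N2 n2)
    (12 * 6794772480 * c ^ 8 * / med N123 N1 N2 * (N123 * N1 * N2) ^ 3).
Proof.
  intros Hc H123 H1 H2.
  apply card_le_weaken with (12 * 6794772480 * c ^ 8 * / med N1 N2 N123 * (N1 * N2 * N123) ^ 3).
  { rewrite (med_rotate N1 N2 N123). right. ring. }
  apply card_le_inj with
    (g := fun n : Z3 * Z3 * Z3 => let '(n1, n2, n3) := n in (n1, n2, vopp (vadd (vadd n1 n2) n3)))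
    (Q := resonant_box s3 s1 s2 s123 (c * N1) (c * N2) (c * N123) m).
  - triple_inj.
  - intros [[n1 n2] n3] (Hres & Hn123 & Hn1 & Hn2).
    cbv beta iota delta [resonant_box resonant] in *.
    rewrite znorm_opp. repeat split; try (apply sim_le; auto).
    eapply Rabs_le_eq; [|exact Hres]. unfold phi.
    replace (vadd (vadd n1 n2) (vopp (vadd (vadd n1 n2) n3))) with (vopp n3) by z3_eq.
    rewrite !jb_opp. ring.
  - apply card_le_resonant_box; auto.
Qed.

Lemma card_le_by_resonant_triple (P : Z3 * Z3 * Z3 -> Prop) (g : Z3 * Z3 * Z3 -> Z3 * Z3 * Z3)
    c X Y Z sg tau F m :
  1 <= c -> 1 <= X -> 1 <= Y -> 1 <= Z ->
  (forall x y, P x -> P y -> g x = g y -> x = y) ->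
  (forall n, P n -> resonant_triple (c * Y) (c * X) (c * Z) sg tau F m (g n)) ->
  card_le P (12 * 6794772480 * c ^ 8 * / Rmin Y Z * (X * Y * Z) ^ 3).
Proof.
  intros Hc HX HY HZ Hinj HPQ. apply card_le_inj with (2 := HPQ); auto.
  eapply card_le_weaken; [|apply card_le_resonant_triple; nra].
  assert (Hm : 0 < Rmin Y Z) by (apply Rmin_glb_lt; lra).
  assert (Hmin : Rmin Y Z * (Y + Z) <= 2 * Y * Z) by (unfold Rmin; destruct (Rle_dec Y Z); nra).
  assert (HP : 0 <= c ^ 8 * X ^ 3 * Y ^ 2 * Z ^ 2).
  { apply Rmult_le_pos; [apply Rmult_le_pos; [apply Rmult_le_pos|]|]; apply pow_le; lra. }
  assert (Hq : Y + Z <= 2 * (Y * Z / Rmin Y Z)).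
  { apply Rmult_le_reg_r with (Rmin Y Z); auto. unfold Rdiv.
    rewrite Rmult_assoc, (Rmult_assoc (Y * Z)), Rinv_l, Rmult_1_r by lra. lra. }
  replace (6794772480 * (c * X) ^ 3 * (c * Y) ^ 2 * (c * Z) ^ 2 * (c * Y + c * Z)) with
    (6794772480 * (c ^ 8 * X ^ 3 * Y ^ 2 * Z ^ 2) * (Y + Z)) by ring.
  replace (12 * 6794772480 * c ^ 8 * / Rmin Y Z * (X * Y * Z) ^ 3) with
    (6794772480 * (c ^ 8 * X ^ 3 * Y ^ 2 * Z ^ 2) * (12 * (Y * Z / Rmin Y Z))) by (field; lra).
  apply Rmult_le_compat_l; [lra|].
  assert (0 <= Y * Z / Rmin Y Z) by (apply Rle_mult_inv_pos; nra). lra.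
Qed.

Lemma card_le_resonant_n123_n12_n1 c s123 s1 s2 s3 N123 N12 N1 m :
  1 <= c -> 1 <= N123 -> 1 <= N12 -> 1 <= N1 ->
  card_le (fun n : Z3 * Z3 * Z3 => let '(n1, n2, n3) := n in
             resonant s123 s1 s2 s3 m n /\ sim c N123 (vadd (vadd n1 n2) n3) /\
             sim c N12 (vadd n1 n2) /\ sim c N1 n1)
    (12 * 6794772480 * c ^ 8 * / Rmin N12 (Rmax N123 N1) * (N123 * N12 * N1) ^ 3).
Proof.
  intros Hc H123 H12 H1. destruct (Rle_dec N1 N123) as [Hle|Hlt].
  - rewrite Rmax_left by lra.
    apply card_le_weaken with (12 * 6794772480 * c ^ 8 * / Rmin N12 N123 * (N1 * N12 * N123) ^ 3);
      [right; ring|].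
    apply (card_le_by_resonant_triple _
      (fun n : Z3 * Z3 * Z3 => let '(n1, n2, n3) := n in
         (vopp (vadd n1 n2), n1, vadd (vadd n1 n2) n3))
      c N1 N12 N123 s3 s123 (fun a b => sgn s1 * jb b + sgn s2 * jb (vadd a b)) m); auto.
    + triple_inj.
    + intros [[n1 n2] n3] (Hres & Hn123 & Hn12 & Hn1).
      cbv beta iota delta [resonant_triple resonant] in *.
      rewrite znorm_opp. repeat split; try (apply sim_le; auto).
      eapply Rabs_le_eq; [|exact Hres]. unfold phi.
      replace (vadd (vopp (vadd n1 n2)) (vadd (vadd n1 n2) n3)) with n3 by z3_eq.
      replace (vadd (vopp (vadd n1 n2)) n1) with (vopp n2) by z3_eq. rewrite jb_opp. ring.
  - rewrite Rmax_right by lra.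
    apply (card_le_by_resonant_triple _
      (fun n : Z3 * Z3 * Z3 => let '(n1, n2, n3) := n in
         (vopp (vadd n1 n2), vadd (vadd n1 n2) n3, n1))
      c N123 N12 N1 s2 s1 (fun a b => sgn s123 * jb b + sgn s3 * jb (vadd a b)) m); auto.
    + triple_inj.
    + intros [[n1 n2] n3] (Hres & Hn123 & Hn12 & Hn1).
      cbv beta iota delta [resonant_triple resonant] in *.
      rewrite znorm_opp. repeat split; try (apply sim_le; auto).
      eapply Rabs_le_eq; [|exact Hres]. unfold phi.
      replace (vadd (vopp (vadd n1 n2)) n1) with (vopp n2) by z3_eq.
      replace (vadd (vopp (vadd n1 n2)) (vadd (vadd n1 n2) n3)) with n3 by z3_eq.
      rewrite jb_opp. ring.
Qed.

Lemma card_le_resonant_n12_n1_n3 c s123 s1 s2 s3 N12 N1 N3 m :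
  1 <= c -> 1 <= N12 -> 1 <= N1 -> 1 <= N3 ->
  card_le (fun n : Z3 * Z3 * Z3 => let '(n1, n2, n3) := n in
             resonant s123 s1 s2 s3 m n /\ sim c N12 (vadd n1 n2) /\ sim c N1 n1 /\ sim c N3 n3)
    (12 * 6794772480 * c ^ 8 * / Rmin N12 (Rmax N1 N3) * (N12 * N1 * N3) ^ 3).
Proof.
  intros Hc H12 H1 H3. destruct (Rle_dec N3 N1) as [Hle|Hlt].
  - rewrite Rmax_left by lra.
    apply card_le_weaken with (12 * 6794772480 * c ^ 8 * / Rmin N12 N1 * (N3 * N12 * N1) ^ 3);
      [right; ring|].
    apply (card_le_by_resonant_triple _
      (fun n : Z3 * Z3 * Z3 => let '(n1, n2, n3) := n in (vopp (vadd n1 n2), n3, n1))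
      c N3 N12 N1 s2 s1 (fun a b => sgn s123 * jb (vadd (vopp a) b) + sgn s3 * jb b) m); auto.
    + triple_inj.
    + intros [[n1 n2] n3] (Hres & Hn12 & Hn1 & Hn3).
      cbv beta iota delta [resonant_triple resonant] in *.
      rewrite znorm_opp. repeat split; try (apply sim_le; auto).
      eapply Rabs_le_eq; [|exact Hres]. unfold phi.
      replace (vadd (vopp (vadd n1 n2)) n1) with (vopp n2) by z3_eq.
      replace (vadd (vopp (vopp (vadd n1 n2))) n3) with (vadd (vadd n1 n2) n3) by z3_eq.
      rewrite jb_opp. ring.
  - rewrite Rmax_right by lra.
    apply card_le_weaken with (12 * 6794772480 * c ^ 8 * / Rmin N12 N3 * (N1 * N12 * N3) ^ 3);
      [right; ring|].
    apply (card_le_by_resonant_triple _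
      (fun n : Z3 * Z3 * Z3 => let '(n1, n2, n3) := n in (vadd n1 n2, n1, n3))
      c N1 N12 N3 s123 s3 (fun a b => sgn s1 * jb b + sgn s2 * jb (vadd a (vopp b))) m); auto.
    + triple_inj.
    + intros [[n1 n2] n3] (Hres & Hn12 & Hn1 & Hn3).
      cbv beta iota delta [resonant_triple resonant] in *.
      repeat split; try (apply sim_le; auto).
      eapply Rabs_le_eq; [|exact Hres]. unfold phi.
      replace (vadd (vadd n1 n2) (vopp n1)) with n2 by z3_eq. ring.
Qed.

Lemma dy_ge1 k : 1 <= dy k.
Proof. apply pow_R1_Rle. lra. Qed.

Theorem proposition4p18 :
  forall c : R, 2 <= c ->
  exists C : R, 0 < C /\
  forall (s123 s1 s2 s3 : bool) (k1 k2 k3 k12 k123 : nat) (m : Z),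
    let N1 := dy k1 in let N2 := dy k2 in let N3 := dy k3 in
    let N12 := dy k12 in let N123 := dy k123 in
    let res := fun n : Z3 * Z3 * Z3 =>
      let '(n1, n2, n3) := n in Rabs (phi s123 s1 s2 s3 n1 n2 n3 - IZR m) <= 1 in
    (* (i) *)
    card_le (fun n : Z3 * Z3 * Z3 => let '(n1, n2, n3) := n in
               res n /\ sim c N1 n1 /\ sim c N2 n2 /\ sim c N3 n3)
      (C * / med N1 N2 N3 * (N1 * N2 * N3) ^ 3) /\
    (* (ii) *)
    card_le (fun n : Z3 * Z3 * Z3 => let '(n1, n2, n3) := n in
               res n /\ sim c N123 (vadd (vadd n1 n2) n3) /\ sim c N1 n1 /\ sim c N2 n2)
      (C * / med N123 N1 N2 * (N123 * N1 * N2) ^ 3) /\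
    (* (iii) *)
    card_le (fun n : Z3 * Z3 * Z3 => let '(n1, n2, n3) := n in
               res n /\ sim c N123 (vadd (vadd n1 n2) n3) /\ sim c N12 (vadd n1 n2)
               /\ sim c N1 n1)
      (C * / Rmin N12 (Rmax N123 N1) * (N123 * N12 * N1) ^ 3) /\
    (* (iv) *)
    card_le (fun n : Z3 * Z3 * Z3 => let '(n1, n2, n3) := n in
               res n /\ sim c N12 (vadd n1 n2) /\ sim c N1 n1 /\ sim c N3 n3)
      (C * / Rmin N12 (Rmax N1 N3) * (N12 * N1 * N3) ^ 3).
Proof.
  intros c Hc. exists (12 * 6794772480 * c ^ 8).
  split; [apply Rmult_lt_0_compat; [lra|apply pow_lt; lra]|].
  intros s123 s1 s2 s3 k1 k2 k3 k12 k123 m N1 N2 N3 N12 N123 res.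
  assert (Hc1 : 1 <= c) by lra.
  pose proof (dy_ge1 k1). pose proof (dy_ge1 k2). pose proof (dy_ge1 k3).
  pose proof (dy_ge1 k12). pose proof (dy_ge1 k123).
  repeat split.
  - apply card_le_resonant_n1_n2_n3; auto.
  - apply card_le_resonant_n123_n1_n2; auto.
  - apply card_le_resonant_n123_n12_n1; auto.
  - apply card_le_resonant_n12_n1_n3; auto.
Qed.
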